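(* In the setting where $K$ is the Erdős–Rényi random graph on ${\cal V}=\{1,\ldots,n\}$ ($n\ge2$) with edge probability $p\in(0,1)$, $Y$ its number of isolated vertices, $V$ uniform on ${\cal V}$ independent of $K$, $K^s$ obtained from $K$ by deleting all edges incident to $V$, and $Y^s$ the number of isolated vertices of $K^s$, for every $\theta\ge 0$, $$E\big(e^{\theta Y^s}-e^{\theta Y}\big)\le \frac{\theta\gamma_\theta}{2}\,E\big(e^{\theta Y}\big),\qquad \gamma_\theta=e^\theta(pe^\theta+1-p)^{n-2}(npe^\theta+1-p)+(n-1)p+1,$$ and consequently $\frac{d}{d\theta}E(e^{\theta Y})\le \mu\big(1+\tfrac{\theta\gamma_\theta}{2}\big)E(e^{\theta Y})$ for $\theta\ge0$, where $\mu=EY$. Moreover, for every $\theta<0$, $E(e^{\theta Y}-e^{\theta Y^s})\le 2|\theta|E(e^{\theta Y})$ and $\frac{d}{d\theta}E(e^{\theta Y})\ge \mu(1+2\theta)E(e^{\theta Y})$.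
   Context: The Erdős–Rényi random graph on ${\cal V}$ with edge probability $p$ has independent Bernoulli($p$) edge indicators for all unordered pairs of distinct vertices; an isolated vertex is one of degree $0$. *)

From Stdlib Require Import Reals.
From mathcomp Require Import all_boot.
Set Implicit Arguments. Unset Strict Implicit. Unset Printing Implicit Defensive.

(* Unordered pairs {i,j} of distinct vertices of 'I_n, represented as (i,j) with i < j. *)
Definition upair (n : nat) := {x : 'I_n * 'I_n | (x.1 < x.2)%N}.

Definition graph (n : nat) := {ffun upair n -> bool}.

Definition adj (n : nat) (g : graph n) (i j : 'I_n) : bool :=
  [exists e : upair n, ((val e == (i, j)) || (val e == (j, i))) && g e].

Definition isolated (n : nat) (g : graph n) (i : 'I_n) : bool :=
  [forall j : 'I_n, ~~ adj g i j].

Definition nisol (n : nat) (g : graph n) : nat := #|[set i | isolated g i]|.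

Definition delete_at (n : nat) (g : graph n) (v : 'I_n) : graph n :=
  [ffun e : upair n => [&& g e, (val e).1 != v & (val e).2 != v]].

Open Scope R_scope.

Definition er_prob (n : nat) (p : R) (g : graph n) : R :=
  \big[Rmult/1]_(e : upair n) (if g e then p else 1 - p).

Definition ER_E (n : nat) (p : R) (f : graph n -> R) : R :=
  \big[Rplus/0]_(g : graph n) (er_prob p g * f g).

Definition ER_EV (n : nat) (p : R) (f : graph n -> 'I_n -> R) : R :=
  \big[Rplus/0]_(v : 'I_n) \big[Rplus/0]_(g : graph n) (/ INR n * er_prob p g * f g v).

Definition mgfY (n : nat) (p : R) (theta : R) : R :=
  ER_E p (fun g : graph n => exp (theta * INR (nisol g))).

Definition gamma_theta (n : nat) (p theta : R) : R :=
  exp theta * (p * exp theta + 1 - p) ^ (n - 2)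
    * (INR n * p * exp theta + 1 - p) + INR (n - 1) * p + 1.

From Stdlib Require Import Reals Lra Lia FunctionalExtensionality.
From mathcomp Require Import all_boot zify Rstruct.
From Coquelicot Require Import Coquelicot.
Set Implicit Arguments. Unset Strict Implicit. Unset Printing Implicit Defensive.

(* 1. Size-bias identity.  Y is the sum of the indicators of the vertices
      being isolated; resampling the edges at v from an independent copy
      gives E[1{v isolated} F(K)] = (1-p)^(n-1) E[F(K^v)], K^v being K
      without the edges at v.  Hence E[Y F(K)] = mu E[F(K^s)] with
      mu = n (1-p)^(n-1); with F = e^(theta Y) this is M'(theta) = mu Ms(theta),
      Ms(theta) = E e^(theta Y^s), so both derivative bounds follow from the
      two bounds on Ms.
   2. theta >= 0.  Deleting the edges at v isolates v and the k neighbours u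
      of v whose only neighbour is v; after resampling the edges at v each
      of them is still isolated with probability 1 - p.  This yields
      Ms(theta) <= phi(theta) M(theta), phi(t) = e^t (p e^t + 1 - p)^(n-1),
      and since phi(0) = 1 and phi'' is nondecreasing, the trapezoid rule
      gives phi(theta) - 1 <= theta (phi'(0) + phi'(theta)) / 2 = theta gamma / 2.
   3. theta < 0.  1 - e^x <= -x and the deterministic count
      sum_v Y(K^v) <= n Y(K) + 2 n give M - Ms <= 2 |theta| M. *)

Section RealBigops.
Open Scope R_scope.
Variable I : finType.

Lemma Rsum_le (F G : I -> R) :
  (forall i, F i <= G i) -> \big[Rplus/0]_i F i <= \big[Rplus/0]_i G i.
Proof. by move=> FG; apply: (big_ind2 Rle) => // *; lra. Qed.

Lemma Rsum_ge0 (F : I -> R) : (forall i, 0 <= F i) -> 0 <= \big[Rplus/0]_i F i.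
Proof. by move=> F0; apply: (big_ind (Rle 0)) => // *; lra. Qed.

Lemma Rprod_ge0 (F : I -> R) : (forall i, 0 <= F i) -> 0 <= \big[Rmult/1]_i F i.
Proof. by move=> F0; apply: (big_ind (Rle 0)) => // *; [lra | apply: Rmult_le_pos]. Qed.

Lemma Rsum_sub (F G : I -> R) :
  \big[Rplus/0]_i (F i - G i) = \big[Rplus/0]_i F i - \big[Rplus/0]_i G i.
Proof.
by rewrite /Rminus big_split /= (big_morph Ropp Ropp_plus_distr Ropp_0).
Qed.

Lemma Rsum_const (c : R) : \big[Rplus/0]_(i : I) c = INR #|I| * c.
Proof.
rewrite big_const; elim: #|I| => [|k IH]; first by rewrite /=; ring.
by rewrite iterS IH S_INR; ring.
Qed.

Lemma INR_sum (f : I -> nat) : INR (\sum_i f i)%N = \big[Rplus/0]_i INR (f i).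
Proof. exact: (big_morph INR plus_INR (erefl (INR 0))). Qed.

Lemma Rprod_cond (A : pred I) (a : R) :
  \big[Rmult/1]_i (if A i then a else 1) = a ^ #|A|.
Proof. by rewrite -big_mkcond big_const; elim: #|A| => //= k ->; lra. Qed.

Lemma Rprod_indicator (Q : pred I) :
  (if [forall i, Q i] then 1 else 0) = \big[Rmult/1]_i (if Q i then 1 else 0).
Proof.
case: (boolP [forall i, Q i]) => [/forallP allQ | /forallPn [i notQi]].
  by rewrite big1 // => i _; rewrite allQ.
by rewrite (bigD1 i) //= (negbTE notQi) Rmult_0_l.
Qed.

End RealBigops.

Section Incidence.
Variable n : nat.
Implicit Types (u v : 'I_n) (e : upair n).

Definition inc v e : bool := ((val e).1 == v) || ((val e).2 == v).

Definition other v e : 'I_n := if (val e).1 == v then (val e).2 else (val e).1.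

Definition star v : {set upair n} := [set e | inc v e].

Lemma other_neq v e : inc v e -> other v e != v.
Proof.
case: e => [[a b] /= ab]; rewrite /inc /other /=.
case: (eqVneq a v) => [<- _ | //]; by rewrite eq_sym neq_ltn ab.
Qed.

Lemma other_uniq u v e : inc v e -> inc u e -> u != v -> other v e = u.
Proof.
case: e => [[a b] ab]; rewrite /inc /other /=.
case: (eqVneq a v) => [-> _ | av /eqP ->] /orP [] /eqP -> //; by rewrite eqxx.
Qed.

Lemma other_inj v e1 e2 : inc v e1 -> inc v e2 -> other v e1 = other v e2 -> e1 = e2.
Proof.
case: e1 => [[a b] /= ab]; case: e2 => [[c d] /= cd]; rewrite /inc /other /=.
move=> h1 h2 E; apply: val_inj => /=; move: ab cd h1 h2 E.
case: (eqVneq a v) => [->|av]; case: (eqVneq c v) => [->|cv] //=.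
- by move=> _ _ _ _ ->.
- by move=> vb cd _ /eqP dv cb; subst; lia.
- by move=> ab vd /eqP bv _ ad; subst; lia.
- by move=> _ _ /eqP -> /eqP -> ->.
Qed.

Lemma other_surj u v : u != v -> exists2 e, inc v e & other v e = u.
Proof.
move=> uv; case: (ltngtP u v) => [lt|lt|E]; last by rewrite (val_inj E) eqxx in uv.
- by exists (exist _ (u, v) lt : upair n); rewrite /inc /other /= ?eqxx ?orbT ?(negbTE uv).
- by exists (exist _ (v, u) lt : upair n); rewrite /inc /other /= eqxx.
Qed.

(* other v is a bijection from the star of v onto the other vertices. *)
Lemma card_star v : #|star v| = (n - 1)%N.
Proof.
have other_star : other v @: star v = [set~ v].
  apply/setP => u; rewrite !inE; apply/imsetP/idP => [[e] | /other_surj [e ve <-]].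
    by rewrite inE => ve ->; apply: other_neq.
  by exists e; rewrite ?inE.
rewrite -(card_in_imset (f := other v)); last by move=> e1 e2; rewrite !inE; apply: other_inj.
by rewrite other_star cardsC1 card_ord subn1.
Qed.

End Incidence.

Section Isolation.
Variable n : nat.
Implicit Types (u v : 'I_n) (e : upair n) (g h : graph n).

Lemma isolatedE g u : isolated g u = [forall e, inc u e ==> ~~ g e].
Proof.
apply/forallP/forallP => [noadj e | noedge j].
  apply/implyP => ue; apply/negP => ge; apply: (negP (noadj (other u e))).
  apply/existsP; exists e; rewrite ge andbT.
  move: ue; rewrite /inc /other; case: e {ge} => [[a b] ab] /=.
  by case: eqP => [-> _ | _ /eqP ->]; rewrite eqxx ?orbT.
apply/negP => /existsP [e /andP [/orP [] /eqP ue ge]];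
  by have := noedge e; rewrite /inc ue eqxx ?orbT ge.
Qed.

Lemma delete_atE g v e : delete_at g v e = g e && ~~ inc v e.
Proof. by rewrite ffunE /inc negb_or. Qed.

Definition resample_at v g h : graph n := [ffun e => if inc v e then h e else g e].

Lemma isolated_resample_at v g h :
  isolated (resample_at v g h) v = [forall e, inc v e ==> ~~ h e].
Proof. by rewrite isolatedE; apply: eq_forallb => e; rewrite ffunE; case: (inc v e). Qed.

Lemma resample_at_empty v g h :
  [forall e, inc v e ==> ~~ h e] -> resample_at v g h = delete_at g v.
Proof.
move=> /forallP hv; apply/ffunP => e; rewrite ffunE delete_atE.
by have := hv e; case: (inc v e) => /= [/negbTE -> | _]; rewrite ?andbF ?andbT.
Qed.

Lemma resample_atK v g h : resample_at v (resample_at v g h) (resample_at v h g) = g.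
Proof. by apply/ffunP => e; rewrite !ffunE; case: (inc v e). Qed.

(* The edges vu of g such that v is the only neighbour of u. *)
Definition leaf_edges v g : {set upair n} :=
  [set e | inc v e & isolated (delete_at g v) (other v e)].

(* Every isolated vertex of delete_at g v other than v is the far end of a
   leaf edge at v. *)
Lemma nisol_delete_leaf v g : (nisol (delete_at g v) <= 1 + #|leaf_edges v g|)%N.
Proof.
have cover : [set i | isolated (delete_at g v) i] \subset v |: (other v @: leaf_edges v g).
  apply/subsetP => i; rewrite !inE => iso_i.
  case: (eqVneq i v) => [//| iv] /=.
  have [e ve ei] := other_surj iv.
  by apply/imsetP; exists e; rewrite // inE ve /= ei.
apply: leq_trans (subset_leq_card cover) _.
rewrite cardsU1; apply: leq_add; first by case: (v \notin _).
exact: leq_imset_card.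
Qed.

Lemma card_leaf_edges v g : (#|leaf_edges v g| <= n - 1)%N.
Proof.
rewrite -(card_star v); apply: subset_leq_card; apply/subsetP => e.
by rewrite !inE => /andP [].
Qed.

(* After resampling the edges at v, every leaf at v whose edge is absent
   from h is isolated. *)
Lemma leaf_edges_resample v g h :
  (#|[set e in leaf_edges v g | ~~ h e]| <= nisol (resample_at v g h))%N.
Proof.
rewrite -(@card_in_imset _ _ (other v)); last first.
  move=> e1 e2; rewrite !inE => /andP [/andP [ve1 _] _] /andP [/andP [ve2 _] _].
  exact: other_inj.
apply: subset_leq_card; apply/subsetP => u /imsetP [e].
rewrite !inE => /andP [/andP [ve iso_u] he] ->.
rewrite isolatedE; apply/forallP => e'; apply/implyP => ue'; rewrite ffunE.
case: (boolP (inc v e')) => ve'.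
  suff -> : e' = e by [].
  exact: other_inj ve' ve (other_uniq ve' ue' (other_neq ve)).
move: iso_u; rewrite isolatedE => /forallP /(_ e') /implyP /(_ ue').
by rewrite delete_atE ve' andbT.
Qed.

(* The vertices u != v that are not isolated in g but are in delete_at g v,
   i.e. whose unique neighbour is v. *)
Definition freed v g : {set 'I_n} :=
  [set u | [&& isolated (delete_at g v) u, ~~ isolated g u & u != v]].

Lemma nisol_delete_freed v g : (nisol (delete_at g v) <= nisol g + 1 + #|freed v g|)%N.
Proof.
have cover : [set i | isolated (delete_at g v) i] \subset
    [set i | isolated g i] :|: (v |: freed v g).
  apply/subsetP => i; rewrite !inE => iso_i.
  by case: (isolated g i); case: (eqVneq i v); rewrite ?iso_i ?orbT.
apply: leq_trans (subset_leq_card cover) _.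
rewrite cardsU -addnA; apply: leq_trans (leq_subr _ _) _.
rewrite leq_add2l cardsU1; apply: leq_add => //; by case: (v \notin _).
Qed.

(* A vertex has a unique neighbour, so it is freed by at most one v. *)
Lemma sum_card_freed g : (\sum_v #|freed v g| <= n)%N.
Proof.
have freed_once u : (#|[set v | u \in freed v g]| <= 1)%N.
  apply/card_le1_eqP => x y; rewrite !inE => /and3P [iso_x not_iso ux] /and3P [iso_y _ uy].
  move: not_iso; rewrite isolatedE => /forallPn [e]; rewrite negb_imply negbK => /andP [ue ge].
  have nbr z : isolated (delete_at g z) u -> u != z -> other u e = z.
    rewrite isolatedE => /forallP /(_ e) /implyP /(_ ue).
    by rewrite delete_atE ge negbK => ze uz; apply: other_uniq; rewrite // eq_sym.
  by rewrite -(nbr x iso_x ux) -(nbr y iso_y uy).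
rewrite (eq_bigr (fun v => \sum_u (u \in freed v g))); last first.
  by move=> v _; rewrite -sum1_card big_mkcond.
rewrite exchange_big /= -[X in (_ <= X)%N]card_ord -sum1_card; apply: leq_sum => u _.
apply: leq_trans (freed_once u); rewrite -sum1dep_card [X in (_ <= X)%N]big_mkcond /=.
by apply: leq_sum => v _; case: (u \in freed v g).
Qed.

Lemma sum_nisol_delete g : (\sum_v nisol (delete_at g v) <= n * nisol g + 2 * n)%N.
Proof.
apply: (@leq_trans (\sum_v (nisol g + 1 + #|freed v g|))).
  by apply: leq_sum => v _; apply: nisol_delete_freed.
rewrite big_split /= sum_nat_const card_ord.
have := sum_card_freed g; set S := (\sum_(v < n) _)%N; lia.
Qed.

End Isolation.

Open Scope R_scope.

Lemma exp_le (a b : R) : a <= b -> exp a <= exp b.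
Proof. by case/Rle_lt_or_eq_dec => [/exp_increasing|->]; lra. Qed.

Lemma exp_mul_INR (t : R) (k : nat) : exp (t * INR k) = exp t ^ k.
Proof.
elim: k => [|k IH]; first by rewrite /= Rmult_0_r exp_0.
by rewrite S_INR Rmult_plus_distr_l Rmult_1_r exp_plus IH /=; ring.
Qed.

(* 1 - e^(b - a) <= a - b, multiplied by e^a. *)
Lemma exp_diff_le (a b : R) : exp a - exp b <= exp a * (a - b).
Proof.
have : exp a * (1 + (b - a)) <= exp a * exp (b - a).
  by apply: Rmult_le_compat_l; [apply: Rlt_le; apply: exp_pos | apply: exp_ineq1_le].
by rewrite -exp_plus; replace (a + (b - a)) with b by ring; lra.
Qed.

(* Trapezoid rule: if f' is convex (f'' nondecreasing), the chord of f' lies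
   above f', so the trapezoid over-estimates the integral of f' on [0, x]. *)
Lemma trapezoid (f f1 f2 : R -> R) (x : R) :
  (forall t, derivable_pt_lim f t (f1 t)) ->
  (forall t, derivable_pt_lim f1 t (f2 t)) ->
  (forall s t, s <= t -> f2 s <= f2 t) -> 0 <= x ->
  f x - f 0 <= x * (f1 0 + f1 x) / 2.
Proof.
move=> df df1 f2_mono x_ge0.
have [x_gt0|<-] := Rle_lt_or_eq_dec _ _ x_ge0; last lra.
pose g t := t * (f1 0 + f1 t) / 2 - f t.
have dg t : derivable_pt_lim g t ((f1 0 + f1 t) / 2 + t * f2 t / 2 - f1 t).
  have Hf := proj2 (is_derive_Reals _ _ _) (df t).
  have Hf1 := proj2 (is_derive_Reals _ _ _) (df1 t).
  apply is_derive_Reals; rewrite /g; auto_derive.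
    by split; [exists (f2 t) | split; [exists (f1 t) |]].
  rewrite (is_derive_unique _ _ _ Hf) (is_derive_unique _ _ _ Hf1); field.
(* g - g(0) >= 0 on [0, x]: by the mean value theorem for g on [0, x], then
   for f1 on [0, c], g'(c) = c (f2 c - f2 d) / 2 with 0 < d < c. *)
have [c [g_mvt c_in]] := MVT_cor2 g _ 0 x x_gt0 (fun c _ => dg c).
have [d [f1_mvt d_in]] := MVT_cor2 f1 f2 0 c (proj1 c_in) (fun d _ => df1 d).
have f2_dc : f2 d <= f2 c by apply: f2_mono; lra.
have slope_ge0 : 0 <= (f1 0 + f1 c) / 2 + c * f2 c / 2 - f1 c.
  have : 0 <= c * (f2 c - f2 d) by apply: Rmult_le_pos; lra.
  nra.
have : 0 <= g x - g 0 by rewrite g_mvt; apply: Rmult_le_pos; lra.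
rewrite /g; lra.
Qed.

(* The function phi(t) = e^t (p e^t + 1 - p)^m, the factor by which deleting
   the edges at a vertex can inflate E e^(theta Y) (with m = n - 1), together
   with its first two derivatives phi1 and phi2. *)
Section Phi.
Variables (p : R) (m : nat).
Hypothesis p01 : 0 <= p <= 1.

Definition base (t : R) : R := p * exp t + 1 - p.
Definition phi (t : R) : R := exp t * base t ^ m.
Definition phi1 (t : R) : R :=
  exp t * base t ^ m + INR m * p * exp t ^ 2 * base t ^ m.-1.
Definition phi2 (t : R) : R :=
  exp t ^ 1 * base t ^ m + 3 * INR m * p * (exp t ^ 2 * base t ^ m.-1)
  + INR m * INR m.-1 * p ^ 2 * (exp t ^ 3 * base t ^ m.-2).

Lemma phi_deriv t : derivable_pt_lim phi t (phi1 t).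
Proof.
apply is_derive_Reals; rewrite /phi /phi1 /base; auto_derive => //.
by rewrite /Rminus; ring.
Qed.

Lemma phi1_deriv t : derivable_pt_lim phi1 t (phi2 t).
Proof.
apply is_derive_Reals; rewrite /phi1 /phi2 /base; auto_derive => //.
by rewrite /Rminus; ring.
Qed.

Lemma exp_base_pow_incr (a b : nat) (s t : R) : s <= t ->
  0 <= exp s ^ a * base s ^ b <= exp t ^ a * base t ^ b.
Proof.
move=> st.
have e_st : 0 <= exp s <= exp t by split; [apply: Rlt_le; apply: exp_pos | exact: exp_le].
have b_st : 0 <= base s <= base t by rewrite /base; split; nra.
split; first by apply: Rmult_le_pos; apply: pow_le; lra.
by apply: Rmult_le_compat; try apply: pow_le; try apply: pow_incr; lra.
Qed.

Lemma phi_ge0 t : 0 <= phi t.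
Proof. by have [] := exp_base_pow_incr 1 m (Rle_refl t); rewrite /phi pow_1. Qed.

Lemma phi2_incr (s t : R) : s <= t -> phi2 s <= phi2 t.
Proof.
move=> st; rewrite /phi2.
have c1 : 0 <= 3 * INR m * p by have := pos_INR m; nra.
have c2 : 0 <= INR m * INR m.-1 * p ^ 2.
  by apply: Rmult_le_pos; [apply: Rmult_le_pos; apply: pos_INR | apply: pow_le; lra].
have := exp_base_pow_incr 1 m st; have := exp_base_pow_incr 2 m.-1 st.
have := exp_base_pow_incr 3 m.-2 st.
move=> t3 t2 t1; apply: Rplus_le_compat; [apply: Rplus_le_compat|]; try lra;
  apply: Rmult_le_compat_l; lra.
Qed.

Lemma phi_at0 : phi 0 = 1.
Proof.
rewrite /phi /base exp_0; replace (p * 1 + 1 - p) with 1 by ring.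
by rewrite pow1 Rmult_1_r.
Qed.

Lemma phi_trapezoid (theta : R) : 0 <= theta -> phi theta - 1 <= theta * (phi1 0 + phi1 theta) / 2.
Proof.
move=> th0; rewrite -phi_at0.
by apply: trapezoid th0 => [t | t | s t]; [apply: phi_deriv | apply: phi1_deriv | apply: phi2_incr].
Qed.

(* Numeric core of the theta >= 0 bound: with x = e^theta >= 1,
   x <= base(theta) (p + (1 - p) x), whence x^(k+1) <= phi(theta) (p + (1-p) x)^k. *)
Lemma exp_pow_le_phi (k : nat) (theta : R) : 0 <= theta -> (k <= m)%N ->
  exp theta ^ k.+1 <= phi theta * (p + (1 - p) * exp theta) ^ k.
Proof.
move=> th0 km; rewrite /phi; set x := exp theta; set r := base theta; set q := p + _.
have x1 : 1 <= x by rewrite /x -exp_0; apply: exp_le.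
have r1 : 1 <= r by rewrite /r /base -/x; nra.
have q1 : 1 <= q by rewrite /q; nra.
have x_rq : x <= r * q.
  have : 0 <= p * (1 - p) * ((x - 1) * (x - 1)) by apply: Rmult_le_pos; nra.
  by rewrite /r /q /base -/x; nra.
rewrite /= Rmult_assoc; apply: Rmult_le_compat_l; first lra.
apply: Rle_trans (_ : (r * q) ^ k <= _); first by apply: pow_incr; lra.
rewrite Rpow_mult_distr; apply: Rmult_le_compat_r; first by apply: pow_le; lra.
by apply: Rle_pow => //; apply/leP.
Qed.

End Phi.

Lemma phi1_gamma (n : nat) (p theta : R) : (2 <= n)%N ->
  phi1 p (n - 1) 0 + phi1 p (n - 1) theta = gamma_theta n p theta.
Proof.
move=> n2; have [K ->] : exists K, n = K.+2 by exists (n - 2)%N; lia.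
rewrite /phi1 /gamma_theta /base.
have -> : (K.+2 - 1 = K.+1)%N by lia.
have -> : (K.+2 - 2 = K)%N by lia.
rewrite !S_INR exp_0 /=.
replace (p * 1 + 1 - p) with 1 by ring; rewrite pow1; ring.
Qed.

Lemma derivable_pt_lim_bigsum (I : finType) (F : I -> R -> R) (F' : I -> R) (x : R) :
  (forall i, derivable_pt_lim (F i) x (F' i)) ->
  derivable_pt_lim (fun y => \big[Rplus/0]_i F i y) x (\big[Rplus/0]_i F' i).
Proof.
move=> dF; suff sum_seq (r : seq I) : derivable_pt_lim (fun y => \big[Rplus/0]_(i <- r) F i y) x
    (\big[Rplus/0]_(i <- r) F' i) by exact: sum_seq.
elim: r => [|i r IH].
  have -> : (fun y => \big[Rplus/0]_(i <- [::]) F i y) = fct_cte 0.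
    by apply: functional_extensionality => y; rewrite big_nil.
  by rewrite big_nil; exact: derivable_pt_lim_const.
have -> : (fun y => \big[Rplus/0]_(j <- i :: r) F j y) =
    plus_fct (F i) (fun y => \big[Rplus/0]_(j <- r) F j y).
  by apply: functional_extensionality => y; rewrite big_cons.
by rewrite big_cons; exact: derivable_pt_lim_plus.
Qed.

Section ErdosRenyi.
Variables (n : nat) (p : R).
Hypothesis p01 : 0 <= p <= 1.
Implicit Types (v : 'I_n) (g h : graph n) (F G : graph n -> R).

Lemma er_prob_ge0 g : 0 <= er_prob p g.
Proof. by apply: Rprod_ge0 => e; case: (g e); lra. Qed.

Lemma ER_E_le F G : (forall g, F g <= G g) -> ER_E p F <= ER_E p G.
Proof.
by move=> FG; apply: Rsum_le => g; apply: Rmult_le_compat_l; [apply: er_prob_ge0 | apply: FG].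
Qed.

Lemma ER_E_ge0 F : (forall g, 0 <= F g) -> 0 <= ER_E p F.
Proof.
by move=> F0; apply: Rsum_ge0 => g; apply: Rmult_le_pos; [apply: er_prob_ge0 | apply: F0].
Qed.

Lemma ER_E_scal (c : R) F : ER_E p (fun g => c * F g) = c * ER_E p F.
Proof. by rewrite /ER_E big_distrr; apply: eq_bigr => g _ /=; ring. Qed.

Lemma ER_E_sum (I : finType) (F : I -> graph n -> R) :
  ER_E p (fun g => \big[Rplus/0]_i F i g) = \big[Rplus/0]_i ER_E p (F i).
Proof. by rewrite /ER_E exchange_big; apply: eq_bigr => i _; rewrite big_distrr. Qed.

Lemma ER_E_prod (psi : upair n -> bool -> R) :
  ER_E p (fun h => \big[Rmult/1]_e psi e (h e))
  = \big[Rmult/1]_e (p * psi e true + (1 - p) * psi e false).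
Proof.
transitivity (\big[Rmult/1]_e \big[Rplus/0]_(b : bool) ((if b then p else 1 - p) * psi e b)).
  by rewrite bigA_distr_bigA; apply: eq_bigr => h _; rewrite -big_split.
by apply: eq_bigr => e _; rewrite big_bool.
Qed.

Lemma ER_E_const (c : R) : ER_E p (fun _ : graph n => c) = c.
Proof.
have total : ER_E p (fun _ : graph n => 1) = 1.
  have := ER_E_prod (fun _ _ => 1); rewrite [X in _ = X]big1 => [prod1 | e _]; last by ring.
  by rewrite -[RHS]prod1; apply: eq_bigr => g _; rewrite big1_eq.
by rewrite -[RHS]Rmult_1_r -total -ER_E_scal; apply: eq_bigr => g _ /=; rewrite Rmult_1_r.
Qed.

Lemma er_prob_resample_at v g h :
  er_prob p (resample_at v g h) * er_prob p (resample_at v h g) = er_prob p g * er_prob p h.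
Proof.
rewrite /er_prob -!big_split; apply: eq_bigr => e _; rewrite !ffunE.
by case: (inc v e) => //; apply: Rmult_comm.
Qed.

Lemma ER_E_resample v F :
  ER_E p F = ER_E p (fun g => ER_E p (fun h => F (resample_at v g h))).
Proof.
have pairE (H : graph n -> graph n -> R) : ER_E p (fun g => ER_E p (H g))
    = \big[Rplus/0]_(x : graph n * graph n) (er_prob p x.1 * er_prob p x.2 * H x.1 x.2).
  rewrite /ER_E; under eq_bigr => g _ do rewrite big_distrr.
  by rewrite pair_big; apply: eq_bigr => [[g h]] _ /=; ring.
pose swap (x : graph n * graph n) := (resample_at v x.1 x.2, resample_at v x.2 x.1).
have swapK : involutive swap by case=> g h; rewrite /swap /= !resample_atK.
have -> : ER_E p F = ER_E p (fun g => ER_E p (fun _ : graph n => F g)).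
  by apply: eq_bigr => g _; rewrite ER_E_const.
rewrite !pairE (reindex_inj (inv_inj swapK)); apply: eq_bigr => [[g h]] _ /=.
by rewrite er_prob_resample_at.
Qed.

Lemma ER_E_no_edge_at v :
  ER_E p (fun h => if [forall e, inc v e ==> ~~ h e] then 1 else 0) = (1 - p) ^ (n - 1).
Proof.
pose no_edge (e : upair n) (b : bool) := if inc v e ==> ~~ b then 1 else 0.
transitivity (ER_E p (fun h => \big[Rmult/1]_e no_edge e (h e))).
  by apply: eq_bigr => h _; rewrite Rprod_indicator.
rewrite ER_E_prod.
rewrite (eq_bigr (fun e => if e \in star v then 1 - p else 1)); last first.
  by move=> e _; rewrite /no_edge inE; case: (inc v e) => /=; ring.
by rewrite Rprod_cond -(card_star v); congr (_ ^ _); apply: eq_card.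
Qed.

(* Conditioning on v being isolated amounts to deleting the edges at v. *)
Lemma ER_E_isolated v F :
  ER_E p (fun g => if isolated g v then F g else 0)
  = (1 - p) ^ (n - 1) * ER_E p (fun g => F (delete_at g v)).
Proof.
rewrite (ER_E_resample v) -ER_E_scal; apply: eq_bigr => g _; congr (_ * _).
rewrite -(ER_E_no_edge_at v) [RHS]Rmult_comm -ER_E_scal; apply: eq_bigr => h _ /=.
by rewrite isolated_resample_at; case: ifP => [/resample_at_empty -> | _]; ring.
Qed.

Lemma nisolE g : INR (nisol g) = \big[Rplus/0]_v (if isolated g v then 1 else 0).
Proof.
rewrite /nisol -sum1dep_card big_mkcond INR_sum; apply: eq_bigr => v _.
by case: (isolated g v).
Qed.

(* Y is the sum of the indicators of the vertices being isolated. *)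
Lemma ER_E_nisol_mul F :
  ER_E p (fun g => INR (nisol g) * F g)
  = (1 - p) ^ (n - 1) * \big[Rplus/0]_v ER_E p (fun g => F (delete_at g v)).
Proof.
transitivity (ER_E p (fun g => \big[Rplus/0]_v (if isolated g v then F g else 0))).
  apply: eq_bigr => g _; rewrite nisolE big_distrl; congr (_ * _).
  by apply: eq_bigr => v _ /=; case: ifP => _; ring.
by rewrite ER_E_sum big_distrr; apply: eq_bigr => v _; apply: ER_E_isolated.
Qed.

Lemma mean_nisol : ER_E p (fun g => INR (nisol g)) = INR n * (1 - p) ^ (n - 1).
Proof.
transitivity (ER_E p (fun g => INR (nisol g) * 1)).
  by apply: eq_bigr => g _; rewrite Rmult_1_r.
rewrite ER_E_nisol_mul (eq_bigr (fun _ => 1)) => [|v _]; last exact: ER_E_const.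
by rewrite Rsum_const card_ord; ring.
Qed.

Lemma ER_EVE (f : graph n -> 'I_n -> R) :
  ER_EV p f = / INR n * \big[Rplus/0]_v ER_E p (fun g => f g v).
Proof.
rewrite /ER_EV big_distrr; apply: eq_bigr => v _.
by rewrite /ER_E big_distrr; apply: eq_bigr => g _ /=; ring.
Qed.

Lemma size_bias F : (0 < n)%N ->
  ER_E p (fun g => INR (nisol g) * F g)
  = ER_E p (fun g => INR (nisol g)) * ER_EV p (fun g v => F (delete_at g v)).
Proof.
move=> n_gt0; have n_neq0 : INR n <> 0 by apply: not_0_INR; lia.
by rewrite ER_E_nisol_mul mean_nisol ER_EVE; field.
Qed.

Lemma ER_EV_sub (f h : graph n -> 'I_n -> R) :
  ER_EV p (fun g v => f g v - h g v) = ER_EV p f - ER_EV p h.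
Proof.
rewrite /ER_EV -Rsum_sub; apply: eq_bigr => v _.
by rewrite -Rsum_sub; apply: eq_bigr => g _; ring.
Qed.

Lemma ER_EV_const (F : graph n -> R) : (0 < n)%N -> ER_EV p (fun g _ => F g) = ER_E p F.
Proof.
move=> n_gt0; rewrite ER_EVE Rsum_const card_ord -Rmult_assoc Rinv_l ?Rmult_1_l //.
by apply: not_0_INR; lia.
Qed.

End ErdosRenyi.

Section MgfBounds.
Variables (n : nat) (p : R).
Hypothesis p01 : 0 <= p <= 1.
Implicit Types (v : 'I_n) (g h : graph n).

Lemma mgfY_deriv theta :
  derivable_pt_lim (mgfY n p) theta
    (ER_E p (fun g => INR (nisol g) * exp (theta * INR (nisol g)))).
Proof.
apply: (derivable_pt_lim_bigsum (F := fun g y => er_prob p g * exp (y * INR (nisol g)))) => g.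
by apply is_derive_Reals; auto_derive => //; ring.
Qed.

(* The number of absent edges in a set A is Binomial(|A|, 1 - p). *)
Lemma ER_E_pow_absent (A : {set upair n}) (x : R) :
  ER_E p (fun h => x ^ #|[set e in A | ~~ h e]|) = (p + (1 - p) * x) ^ #|A|.
Proof.
pose absent (e : upair n) (b : bool) := if (e \in A) && ~~ b then x else 1.
transitivity (ER_E p (fun h => \big[Rmult/1]_e absent e (h e))).
  apply: eq_bigr => h _; rewrite /absent Rprod_cond.
  by congr (_ * (_ ^ _)); apply: eq_card => e; rewrite inE.
rewrite ER_E_prod (eq_bigr (fun e => if e \in A then p + (1 - p) * x else 1)) => [|e _].
  by rewrite Rprod_cond; congr (_ ^ _); apply: eq_card.
by rewrite /absent andbF andbT; case: (e \in A); ring.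
Qed.

(* Deleting the edges at v versus resampling them: the leaves at v stay
   isolated after resampling with probability 1 - p each. *)
Lemma exp_nisol_delete_le v g theta : 0 <= theta ->
  exp (theta * INR (nisol (delete_at g v)))
  <= phi p (n - 1) theta * ER_E p (fun h => exp (theta * INR (nisol (resample_at v g h)))).
Proof.
move=> th0; set k := #|leaf_edges v g|.
have delete_le : exp (theta * INR (nisol (delete_at g v))) <= exp theta ^ k.+1.
  rewrite -exp_mul_INR; apply: exp_le; apply: Rmult_le_compat_l => //.
  by apply: le_INR; apply/leP; rewrite -add1n; apply: nisol_delete_leaf.
have resample_ge : ER_E p (fun h => exp theta ^ #|[set e in leaf_edges v g | ~~ h e]|)
    <= ER_E p (fun h => exp (theta * INR (nisol (resample_at v g h)))).
  apply: ER_E_le => // h; rewrite -exp_mul_INR; apply: exp_le; apply: Rmult_le_compat_l => //.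
  by apply: le_INR; apply/leP; apply: leaf_edges_resample.
rewrite ER_E_pow_absent in resample_ge.
apply: Rle_trans delete_le _; apply: Rle_trans (exp_pow_le_phi p01 th0 (card_leaf_edges v g)) _.
by apply: Rmult_le_compat_l => //; apply: phi_ge0.
Qed.

Lemma ER_EV_exp_delete_le theta : (0 < n)%N -> 0 <= theta ->
  ER_EV p (fun g v => exp (theta * INR (nisol (delete_at g v))))
  <= phi p (n - 1) theta * mgfY n p theta.
Proof.
move=> n_gt0 th0; rewrite ER_EVE.
have each v : ER_E p (fun g => exp (theta * INR (nisol (delete_at g v))))
    <= phi p (n - 1) theta * mgfY n p theta.
  rewrite /mgfY [X in _ <= _ * X](ER_E_resample p v) -ER_E_scal.
  by apply: ER_E_le => // g; apply: exp_nisol_delete_le.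
have n_pos : 0 < INR n by apply: lt_0_INR; lia.
set bound := phi p (n - 1) theta * mgfY n p theta.
apply: Rle_trans (_ : _ <= / INR n * \big[Rplus/0]_(v : 'I_n) bound) _.
  by apply: Rmult_le_compat_l; [apply: Rlt_le; apply: Rinv_0_lt_compat | apply: Rsum_le].
by rewrite Rsum_const card_ord; right; field; lra.
Qed.

(* theta <= 0, for a fixed graph: 1 - e^x <= -x and sum_v Y(g - v) <= n Y(g) + 2 n. *)
Lemma sum_exp_delete_le g theta : theta <= 0 ->
  \big[Rplus/0]_v (exp (theta * INR (nisol g)) - exp (theta * INR (nisol (delete_at g v))))
  <= 2 * INR n * - theta * exp (theta * INR (nisol g)).
Proof.
move=> th0; set c := exp (theta * INR (nisol g)).
apply: Rle_trans (Rsum_le (fun v => exp_diff_le _ _)) _.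
rewrite -big_distrr /= Rsum_sub Rsum_const card_ord -big_distrr /= -INR_sum.
have := le_INR _ _ (leP (sum_nisol_delete g)); rewrite plus_INR !mult_INR -/c.
have : 0 <= c * - theta by apply: Rmult_le_pos; [apply: Rlt_le; apply: exp_pos | lra].
rewrite [INR 2]/=; nra.
Qed.

Lemma ER_EV_exp_delete_neg theta : (0 < n)%N -> theta <= 0 ->
  ER_EV p (fun g v => exp (theta * INR (nisol g)) - exp (theta * INR (nisol (delete_at g v))))
  <= 2 * Rabs theta * mgfY n p theta.
Proof.
move=> n_gt0 th0; have n_pos : 0 < INR n by apply: lt_0_INR; lia.
rewrite ER_EVE -ER_E_sum Rabs_left1 //.
apply: Rle_trans (_ : _ <= / INR n *
    ER_E p (fun g => 2 * INR n * - theta * exp (theta * INR (nisol g)))) _.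
  apply: Rmult_le_compat_l; first by apply: Rlt_le; apply: Rinv_0_lt_compat.
  by apply: ER_E_le => // g; apply: sum_exp_delete_le.
by rewrite ER_E_scal /mgfY; right; field; lra.
Qed.

End MgfBounds.

Theorem mainTheorem6 (n : nat) (p : R) :
  (2 <= n)%nat -> 0 < p < 1 ->
  let M := mgfY n p in
  let mu := ER_E p (fun g : graph n => INR (nisol g)) in
  (forall theta : R, 0 <= theta ->
     ER_EV p (fun (g : graph n) (v : 'I_n) => exp (theta * INR (nisol (delete_at g v)))
                         - exp (theta * INR (nisol g)))
       <= theta * gamma_theta n p theta / 2 * M theta
     /\ exists l : R, derivable_pt_lim M theta l /\
          l <= mu * (1 + theta * gamma_theta n p theta / 2) * M theta) /\
  (forall theta : R, theta < 0 ->
     ER_EV p (fun (g : graph n) (v : 'I_n) => exp (theta * INR (nisol g))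
                         - exp (theta * INR (nisol (delete_at g v))))
       <= 2 * Rabs theta * M theta
     /\ exists l : R, derivable_pt_lim M theta l /\
          l >= mu * (1 + 2 * theta) * M theta).
Proof.
move=> n2 p_range M mu.
have p01 : 0 <= p <= 1 by lra.
have n_gt0 : (0 < n)%N by apply/leP; lia.
have mu_ge0 : 0 <= mu by apply: ER_E_ge0 => // g; apply: pos_INR.
have M_ge0 theta : 0 <= M theta by apply: ER_E_ge0 => // g; apply: Rlt_le; apply: exp_pos.
pose Ms theta := ER_EV p (fun (g : graph n) v => exp (theta * INR (nisol (delete_at g v)))).
have dM theta : derivable_pt_lim M theta (mu * Ms theta).
  by have := mgfY_deriv n p theta; rewrite size_bias.
have MsM theta : ER_EV p (fun (g : graph n) v =>
    exp (theta * INR (nisol (delete_at g v))) - exp (theta * INR (nisol g))) = Ms theta - M theta.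
  by rewrite ER_EV_sub ER_EV_const.
have MMs theta : ER_EV p (fun (g : graph n) v =>
    exp (theta * INR (nisol g)) - exp (theta * INR (nisol (delete_at g v)))) = M theta - Ms theta.
  by rewrite ER_EV_sub ER_EV_const.
split=> theta th0.
- have trap := phi_trapezoid (n - 1) p01 th0; rewrite phi1_gamma // in trap.
  have Ms_le : Ms theta <= (1 + theta * gamma_theta n p theta / 2) * M theta.
    apply: Rle_trans (ER_EV_exp_delete_le p01 n_gt0 th0) _.
    by apply: Rmult_le_compat_r => //; lra.
  split; first by rewrite MsM; lra.
  by exists (mu * Ms theta); split=> //; rewrite Rmult_assoc; apply: Rmult_le_compat_l.
- have diff_le := ER_EV_exp_delete_neg p01 n_gt0 (Rlt_le _ _ th0).
  split=> //; exists (mu * Ms theta); split=> //.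
  rewrite MMs Rabs_left // -/M in diff_le.
  by rewrite Rmult_assoc; apply: Rle_ge; apply: Rmult_le_compat_l => //; lra.
Qed.
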